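(* Let $R$ be an uncountable principal ideal domain. Then every ring extension $T$ of $R$ has a maximal subring.
   Context: All rings are commutative with $1\neq0$ and subrings and ring extensions are unital. A maximal subring is a proper subring maximal with respect to inclusion among proper subrings. *)

From HB Require Import structures.
From mathcomp Require Import all_boot all_order all_algebra.
Set Implicit Arguments. Unset Strict Implicit. Unset Printing Implicit Defensive.
Import GRing.Theory.
Local Open Scope ring_scope.

Definition is_ideal (R : comNzRingType) (I : R -> Prop) : Prop :=
  [/\ I 0,
      (forall x y, I x -> I y -> I (x + y)) &
      (forall r x, I x -> I (r * x))].

Definition principal_ideal (R : comNzRingType) (I : R -> Prop) : Prop :=
  exists a : R, forall x, I x <-> exists c : R, x = c * a.

Definition is_PID (R : idomainType) : Prop :=
  forall I : R -> Prop, is_ideal I -> principal_ideal I.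

Definition uncountable (T : Type) : Prop :=
  ~ exists f : T -> nat, injective f.

Definition is_subring (T : comNzRingType) (S : T -> Prop) : Prop :=
  [/\ S 1,
      (forall x y, S x -> S y -> S (x - y)) &
      (forall x y, S x -> S y -> S (x * y))].

Definition proper_pred (T : Type) (S : T -> Prop) : Prop := exists x, ~ S x.

Definition maximal_subring (T : comNzRingType) (S : T -> Prop) : Prop :=
  [/\ is_subring S, proper_pred S &
      forall S' : T -> Prop, is_subring S' -> proper_pred S' ->
        (forall x, S x -> S' x) -> forall x, S' x -> S x].

From HB Require Import structures.
From mathcomp Require Import all_boot all_order all_algebra.
From mathcomp Require Import boolp classical_sets.
From mathcomp Require Import ring.
Set Implicit Arguments. Unset Strict Implicit. Unset Printing Implicit Defensive.
Import GRing.Theory.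
Local Open Scope ring_scope.
Local Open Scope classical_set_scope.

(* Suppose [T] has a prime ideal [Q] and an element [u], invertible modulo [Q] with
   inverse [v], such that no integer polynomial with a coefficient outside [Q]
   vanishes at [u] modulo [Q].  By Zorn there is a subring [A] containing [Q],
   maximal among those over which [u] stays transcendental modulo [Q].  The [w]
   such that [G(u) w] is integral over [A[u]] for some [G] in [A[X]] with
   [G(0)] outside [Q] form a subring [S] that misses [v], while the maximality
   of [A] puts some [u^k w] in [S] for every [w].  As [w = v^k (u^k w)] modulo
   [Q], every subring containing [S] and [v] is [T], so a subring maximal among
   those containing [S] and avoiding [v] is a maximal subring of [T].

   In an uncountable PID [R] the elements algebraic over the prime ring are
   countably many, so some [x] is transcendental.  If a transcendental element
   is a unit of [T], take for [Q] a prime ideal of [T] disjoint from the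
   nonzero elements of [R].  Otherwise, if some [r <> 0] divides no nonzero
   value [g(x)] with [g] in [Z[X]], a prime ideal [qR] containing [r] and
   avoiding these values is maximal, so a maximal ideal of [T] containing [q]
   contracts to it and [x] is invertible modulo that ideal.  Finally, if every
   [r <> 0] divides some nonzero [g(x)], then [r] is a unit (algebraic, hence
   countably many) times one of the finitely many divisors of [g(x)] up to
   units, and [R] would be countable. *)

Lemma Zorn_nonempty_chains (X : Type) (P : set (set X)) (A0 : set X) : P A0 ->
    (forall F : set (set X), F `<=` P -> total_on F subset -> (exists B, F B) ->
      P (\bigcup_(B in F) B)) ->
  exists A, P A /\ forall B, P B -> A `<=` B -> B `<=` A.
Proof.
(* [Zorn_bigcup] also asks for the union [set0] of the empty chain. *)
move=> PA0 Pchain; pose P0 B := P B \/ B = set0.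
have [A [P0A Amax]] : exists A, P0 A /\ forall B, A `<` B -> ~ P0 B.
  apply: Zorn_bigcup => F FP0 Ftot.
  have [[B FB [b Bb]]|Fempty] := pselect (exists2 B, F B & B !=set0).
    pose F' B := F B /\ exists b, B b.
    have -> : \bigcup_(B in F) B = \bigcup_(B in F') B.
      apply/seteqP; split=> x [C FC Cx]; exists C => //; last by case: FC.
      by split=> //; exists x.
    left; apply: Pchain => [C [FC [c Cc]]|C D [FC _] [FD _]|].
    - by case: (FP0 C FC) => // C0; move: Cc; rewrite C0.
    - exact: Ftot.
    - by exists B; split=> //; exists b.
  right; apply/seteqP; split=> x // [C FC Cx].
  by apply: Fempty; exists C => //; exists x.
have maxA B : P B -> A `<=` B -> B `<=` A.
  move=> PB AB x Bx; apply: contrapT => nAx.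
  by apply: (Amax B); [split=> // /(_ x Bx) | left].
case: P0A => [PA|A_eq0]; first by exists A.
by exists A0; split=> // B PB _; apply: subset_trans (maxA B PB _) _; rewrite A_eq0 => x.
Qed.

Lemma bigcup_chain2 (X : Type) (F : set (set X)) (x y : X) : total_on F subset ->
  (\bigcup_(B in F) B) x -> (\bigcup_(B in F) B) y -> exists2 D, F D & D x /\ D y.
Proof.
move=> Ftot [B FB Bx] [C FC Cy].
by case: (Ftot B C FB FC) => [BC|CB]; [exists C => //; split=> //; apply: BC
  | exists B => //; split=> //; apply: CB].
Qed.

Lemma bigcup_chain_finite (X : Type) (F : set (set X)) (a : nat -> X) (n : nat) :
    total_on F subset -> (exists B, F B) ->
    (forall i, (i < n)%N -> (\bigcup_(B in F) B) (a i)) ->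
  exists2 D, F D & forall i, (i < n)%N -> D (a i).
Proof.
move=> Ftot [B0 FB0]; elim: n => [|n IH] han; first by exists B0.
have [B FB Ba] := IH (fun i lt_in => han i (ltnW lt_in)).
have [C FC Cn] := han n (ltnSn n).
case: (Ftot B C FB FC) => [BC|CB].
- by exists C => // i; rewrite ltnS leq_eqVlt => /orP[/eqP ->|/Ba/BC].
- by exists B => // i; rewrite ltnS leq_eqVlt => /orP[/eqP ->|/Ba]; [apply: CB|].
Qed.

Section IdealTheory.
Variables (T : comNzRingType) (Q : set T).
Hypothesis idealQ : is_ideal Q.

Lemma ideal0 : Q 0. Proof. by case: idealQ. Qed.
Lemma idealD x y : Q x -> Q y -> Q (x + y). Proof. by case: idealQ => _ + _; apply. Qed.
Lemma idealMl r x : Q x -> Q (r * x). Proof. by case: idealQ => _ _; apply. Qed.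
Lemma idealMr r x : Q x -> Q (x * r). Proof. by rewrite mulrC; apply: idealMl. Qed.
Lemma idealN x : Q x -> Q (- x). Proof. by rewrite -mulN1r; apply: idealMl. Qed.
Lemma idealB x y : Q x -> Q y -> Q (x - y).
Proof. by move=> Qx /idealN; apply: idealD. Qed.

Lemma ideal_sum (I : Type) (r : seq I) (P : pred I) (F : I -> T) :
  (forall i, P i -> Q (F i)) -> Q (\sum_(i <- r | P i) F i).
Proof. exact: (big_ind Q ideal0 idealD). Qed.

Lemma ideal_horner (p : {poly T}) x : (forall i, Q p`_i) -> Q p.[x].
Proof. by move=> Qp; rewrite horner_coef; apply: ideal_sum => i _; apply: idealMr. Qed.

End IdealTheory.

Section SubringTheory.
Variables (T : comNzRingType) (A : set T).
Hypothesis subringA : is_subring A.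

Lemma subring1 : A 1. Proof. by case: subringA. Qed.
Lemma subringB x y : A x -> A y -> A (x - y). Proof. by case: subringA => _ + _; apply. Qed.
Lemma subringM x y : A x -> A y -> A (x * y). Proof. by case: subringA => _ _; apply. Qed.
Lemma subring0 : A 0. Proof. by rewrite -(subrr 1); apply: subringB; apply: subring1. Qed.
Lemma subringN x : A x -> A (- x).
Proof. by move=> Ax; rewrite -sub0r; apply: subringB => //; apply: subring0. Qed.
Lemma subringD x y : A x -> A y -> A (x + y).
Proof. by move=> Ax Ay; rewrite -[y]opprK; apply: subringB => //; apply: subringN. Qed.

Lemma subring_sum (I : Type) (r : seq I) (P : pred I) (F : I -> T) :
  (forall i, P i -> A (F i)) -> A (\sum_(i <- r | P i) F i).
Proof. exact: (big_ind A subring0 subringD). Qed.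

Lemma subringX x n : A x -> A (x ^+ n).
Proof.
move=> Ax; elim: n => [|n IH]; first by rewrite expr0; apply: subring1.
by rewrite exprS; apply: subringM.
Qed.

Lemma subring_coefM (p q : {poly T}) :
  (forall i, A p`_i) -> (forall i, A q`_i) -> forall i, A (p * q)`_i.
Proof. by move=> Ap Aq i; rewrite coefM; apply: subring_sum => j _; apply: subringM. Qed.

End SubringTheory.

Lemma is_subring_bigcup_chain (T : comNzRingType) (F : set (set T)) :
    (forall B, F B -> is_subring B) -> total_on F subset -> (exists B, F B) ->
  is_subring (\bigcup_(B in F) B).
Proof.
move=> Fsub Ftot [B0 FB0]; split; first by exists B0 => //; exact: subring1 (Fsub _ FB0).
- move=> x y Ux Uy; have [D FD [Dx Dy]] := bigcup_chain2 Ftot Ux Uy.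
  by exists D => //; apply: subringB => //; apply: Fsub.
- move=> x y Ux Uy; have [D FD [Dx Dy]] := bigcup_chain2 Ftot Ux Uy.
  by exists D => //; apply: subringM => //; apply: Fsub.
Qed.

Lemma is_ideal_bigcup_chain (T : comNzRingType) (F : set (set T)) :
    (forall B, F B -> is_ideal B) -> total_on F subset -> (exists B, F B) ->
  is_ideal (\bigcup_(B in F) B).
Proof.
move=> Fid Ftot [B0 FB0]; split; first by exists B0 => //; exact: ideal0 (Fid _ FB0).
- move=> x y Ux Uy; have [D FD [Dx Dy]] := bigcup_chain2 Ftot Ux Uy.
  by exists D => //; apply: idealD => //; apply: Fid.
- by move=> r x [B FB Bx]; exists B => //; apply: idealMl => //; apply: Fid.
Qed.

Definition prime_ideal (T : comNzRingType) (Q : set T) :=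
  [/\ is_ideal Q, ~ Q 1 & forall a b, Q (a * b) -> Q a \/ Q b].

Lemma prime_idealX (T : comNzRingType) (Q : set T) a n :
  prime_ideal Q -> Q (a ^+ n) -> Q a.
Proof.
case=> _ nQ1 Qprime; elim: n => [|n IH]; first by rewrite expr0.
by rewrite exprS => /Qprime [|/IH].
Qed.

Definition dvdr (T : comNzRingType) (a b : T) := exists c, b = c * a.

Lemma dvdr_refl (T : comNzRingType) (a : T) : dvdr a a.
Proof. by exists 1; rewrite mul1r. Qed.

Lemma dvdr_trans (T : comNzRingType) (a b c : T) : dvdr a b -> dvdr b c -> dvdr a c.
Proof. by move=> [d ->] [e ->]; exists (e * d); rewrite mulrA. Qed.

Lemma dvdr_ideal (T : comNzRingType) (a : T) : is_ideal (dvdr a).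
Proof.
split; first by exists 0; rewrite mul0r.
- by move=> _ _ [c ->] [d ->]; exists (c + d); rewrite mulrDl.
- by move=> r _ [c ->]; exists (r * c); rewrite mulrA.
Qed.

Section IdealsAvoiding.
Variables (T : comNzRingType) (M : set T).

Definition max_ideal_avoiding (J : set T) :=
  [/\ is_ideal J, (forall x, J x -> ~ M x) &
      forall J', is_ideal J' -> J `<=` J' -> (forall x, J' x -> ~ M x) -> J' `<=` J].

Lemma exists_max_ideal_avoiding (I : set T) : is_ideal I -> (forall x, I x -> ~ M x) ->
  exists2 J, I `<=` J & max_ideal_avoiding J.
Proof.
move=> idI IM; pose P J := [/\ is_ideal J, I `<=` J & forall x, J x -> ~ M x].
have [J [[idJ IJ JM] Jmax]] : exists J, P J /\ forall J', P J' -> J `<=` J' -> J' `<=` J.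
  apply: (@Zorn_nonempty_chains _ _ I) => [|F FP Ftot Fn0]; first by split.
  split.
  - by apply: is_ideal_bigcup_chain => // B /FP [].
  - by case: Fn0 => B FB x Ix; exists B => //; case: (FP B FB) => _ + _; apply.
  - by move=> x [B FB Bx]; case: (FP B FB) => _ _; apply.
exists J => //; split=> // J' idJ' JJ' J'M; apply: Jmax => //.
by split=> //; apply: subset_trans JJ'.
Qed.

Lemma max_ideal_avoiding_adjoin J a : max_ideal_avoiding J -> ~ J a ->
  exists j s, J j /\ M (j + s * a).
Proof.
case=> idJ JM Jmax nJa; apply: contrapT => noM; apply: nJa.
pose Ja z := exists j s, J j /\ z = j + s * a.
have idJa : is_ideal Ja.
  split; first by exists 0, 0; rewrite mul0r addr0; split=> //; apply: ideal0.
  - move=> _ _ [j [s [Jj ->]]] [j' [s' [Jj' ->]]]; exists (j + j'), (s + s').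
    by split; [apply: idealD | ring].
  - move=> r _ [j [s [Jj ->]]]; exists (r * j), (r * s).
    by split; [apply: idealMl | ring].
apply: (Jmax Ja idJa).
- by move=> x Jx; exists x, 0; rewrite mul0r addr0.
- by move=> _ [j [s [Jj ->]]] Mjsa; apply: noM; exists j, s.
- by exists 0, 1; rewrite mul1r add0r; split=> //; apply: ideal0.
Qed.

Lemma max_ideal_avoiding_prime J : M 1 -> (forall a b, M a -> M b -> M (a * b)) ->
  max_ideal_avoiding J -> prime_ideal J.
Proof.
move=> M1 MM maxJ; have [idJ JM _] := maxJ.
split=> // [/JM//|a b Jab]; apply: contrapT => /not_orP[nJa nJb].
have [j1 [s1 [Jj1 Ma]]] := max_ideal_avoiding_adjoin maxJ nJa.
have [j2 [s2 [Jj2 Mb]]] := max_ideal_avoiding_adjoin maxJ nJb.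
apply: JM (MM _ _ Ma Mb).
have -> : (j1 + s1 * a) * (j2 + s2 * b) =
    j1 * (j2 + s2 * b) + s1 * a * j2 + s1 * s2 * (a * b) by ring.
by apply: (idealD idJ); [apply: (idealD idJ)|]; [apply: idealMr|apply: idealMl|apply: idealMl].
Qed.

End IdealsAvoiding.

Lemma exists_maximal_subring (T : comNzRingType) (S : set T) (t : T) :
    is_subring S -> ~ S t ->
    (forall S', is_subring S' -> S `<=` S' -> S' t -> forall x, S' x) ->
  exists M : set T, maximal_subring M.
Proof.
move=> subS nSt St_full; pose P A := [/\ is_subring A, S `<=` A & ~ A t].
have [M [[subM SM nMt] Mmax]] : exists M, P M /\ forall A, P A -> M `<=` A -> A `<=` M.
  apply: (@Zorn_nonempty_chains _ _ S) => [|F FP Ftot Fn0]; first by split.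
  split.
  - by apply: is_subring_bigcup_chain => // B /FP [].
  - by case: Fn0 => B FB x Sx; exists B => //; case: (FP B FB) => _ + _; apply.
  - by case=> B FB Bt; case: (FP B FB).
exists M; split=> //; first by exists t.
move=> S' subS' [y nS'y] MS'; have [S't|nS't] := pselect (S' t).
  by exfalso; apply: nS'y; apply: St_full => //; apply: subset_trans MS'.
by apply: Mmax => //; split=> //; apply: subset_trans MS'.
Qed.

Section SubringRange.
Variables (T : comNzRingType) (A : set T).
Hypothesis subringA : is_subring A.

Definition subring_pred : {pred T} := fun x => `[< A x >].

Lemma subring_pred_closed : subring_closed subring_pred.
Proof.
split=> [|x y /asboolP Ax /asboolP Ay|x y /asboolP Ax /asboolP Ay]; apply/asboolP.
- exact: subring1.
- exact: subringB.
- exact: subringM.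
Qed.

HB.instance Definition _ := GRing.isSubringClosed.Build T subring_pred subring_pred_closed.
Definition subring_type := {x : T | x \in subring_pred}.
HB.instance Definition _ := [isSub of subring_type for @sval T (fun x => x \in subring_pred)].
HB.instance Definition _ := [Choice of subring_type by <:].
HB.instance Definition _ := [SubChoice_isSubComNzRing of subring_type by <:].

Lemma subring_is_range :
  exists (K : comNzRingType) (phi : {rmorphism K -> T}), A = range phi.
Proof.
exists subring_type, (GRing.RMorphism.clone _ _ (val : subring_type -> T) _).
apply/seteqP; split=> [x Ax|_ [y _ <-]]; last exact/asboolP/(valP y).
by exists (exist _ x (asboolT Ax)).
Qed.

End SubringRange.

Lemma integral_lead_coef_mul (K L : comNzRingType) (h : {rmorphism K -> L})
    (p : {poly K}) (w : L) :
  (1 < size p)%N -> root (map_poly h p) w -> integralOver h (h (lead_coef p) * w).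
Proof.
move=> sp rw; set c := lead_coef p; set n := (size p).-1.
have size_p : size p = n.+1 by rewrite /n prednK // ltnW.
have n_gt0 : (0 < n)%N by rewrite -ltnS -size_p.
(* [m] is monic with [m(c X) = c^(n-1) p(X)]. *)
pose m : {poly K} := 'X^n + \poly_(j < n) (p`_j * c ^+ (n.-1 - j)).
exists m.
  by rewrite monicE lead_coefDl ?lead_coefXn // size_polyXn ltnS size_poly.
have size_map (q : {poly K}) k : (size q <= k)%N -> (size (map_poly h q) <= k)%N.
  exact/leq_trans/size_poly.
have pn : p`_n = c by rewrite /c lead_coefE size_p.
have eval_m : (map_poly h m).[h c * w] = h c ^+ n.-1 * (map_poly h p).[w].
  rewrite rmorphD /= map_polyXn hornerD hornerXn.
  rewrite (@horner_coef_wide _ n) ?size_map ?size_poly //.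
  rewrite [in RHS](@horner_coef_wide _ n.+1) ?size_map ?size_p //.
  rewrite big_ord_recr /= coef_map /= pn mulrDr mulr_sumr addrC; congr (_ + _).
    apply: eq_bigr => j _; rewrite !coef_map coef_poly ltn_ord /= rmorphM rmorphXn.
    rewrite exprMn [in RHS]mulrCA -!mulrA; congr (_ * _); rewrite !mulrA -exprD.
    by rewrite subnK // -ltnS prednK.
  by rewrite exprMn -{1}(prednK n_gt0) exprS mulrCA mulrA.
by rewrite /root eval_m (rootP rw) mulr0.
Qed.

Lemma horner_map_swapXY (K T : comNzRingType) (phi : {rmorphism K -> T})
    (B : {poly {poly K}}) (a b : T) :
  (map_poly (horner_eval a \o map_poly phi) (swapXY B)).[b] =
  (map_poly (horner_eval b \o map_poly phi) B).[a].
Proof.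
rewrite !map_poly_comp -swapXY_map -!horner_swapXY swapXYK.
by rewrite -horner2_swapXY.
Qed.

Lemma exists_lead_coef_notin (K L : comNzRingType) (h : {rmorphism K -> L})
    (Q : set L) (P : {poly K}) (y : L) (j : nat) :
    is_ideal Q -> Q (map_poly h P).[y] -> ~ Q (h P`_j) ->
  exists P' : {poly K}, Q (map_poly h P').[y] /\ ~ Q (h (lead_coef P')).
Proof.
move=> idQ; have [n] := ubnP (size P); elim: n P j => // n IH P j sP QP nQj.
have [Qlead|] := pselect (Q (h (lead_coef P))); last by exists P.
have Q_out i : (size P <= i)%N -> Q (h P`_i).
  by move=> ?; rewrite nth_default // rmorph0; apply: ideal0.
have P_pos : (0 < size P)%N.
  by rewrite lt0n; apply/negP => /eqP sP0; apply/nQj/Q_out; rewrite sP0.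
set m := (size P).-1; have size_P : size P = m.+1 by rewrite prednK.
have eP : P = take_poly m P + lead_coef P *: 'X^m.
  apply/polyP => i; rewrite coefD coef_take_poly coefZ coefXn.
  case: ltngtP => [|mi|->]; rewrite ?mulr0 ?addr0 ?mulr1 ?add0r //.
  by rewrite nth_default // size_P.
apply: (IH (take_poly m P) j).
- by rewrite (leq_ltn_trans (size_take_poly _ _)) // -ltnS -size_P.
- move: QP; rewrite {1}eP rmorphD /= hornerD linearZ /= map_polyXn hornerZ hornerXn.
  by move/(idealB idQ)/(_ (idealMr idQ (y ^+ m) Qlead)); rewrite addrK.
- rewrite coef_take_poly; case: ltngtP => // [mj|jm].
    by case: nQj; apply: Q_out; rewrite size_P.
  by move: nQj; rewrite jm -lead_coefE.
Qed.

Definition int_transcendental_mod (T : comNzRingType) (Q : set T) (u : T) :=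
  forall g : {poly int}, Q (map_poly intr g).[u] -> forall i, Q (g`_i)%:~R.

Definition adjoin (T : comNzRingType) (A : set T) (y : T) : set T :=
  fun z => exists2 r : {poly T}, (forall j, A r`_j) & z = r.[y].

Lemma is_subring_adjoin (T : comNzRingType) (A : set T) (y : T) :
  is_subring A -> is_subring (adjoin A y).
Proof.
move=> subA; split.
- by exists 1; rewrite ?hornerC // => j; rewrite coefC; case: eqP => _;
    [apply: subring1 | apply: subring0].
- move=> _ _ [r1 A1 ->] [r2 A2 ->]; exists (r1 - r2); last by rewrite hornerD hornerN.
  by move=> j; rewrite coefB; apply: subringB.
- move=> _ _ [r1 A1 ->] [r2 A2 ->]; exists (r1 * r2); last by rewrite hornerM.
  exact: subring_coefM.
Qed.

Lemma lift_poly_range (K T : comNzRingType) (phi : {rmorphism K -> T}) (r : {poly T}) :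
  (forall j, range phi r`_j) -> exists r' : {poly K}, map_poly phi r' = r.
Proof.
move=> range_r; have [g gP] : {g : nat -> K & forall j, phi (g j) = r`_j}.
  by apply: (@choice _ _ (fun j k => phi k = r`_j)) => j; have [k _ <-] := range_r j; exists k.
exists (\poly_(j < size r) g j); apply/polyP => j; rewrite coef_map coef_poly.
by case: ltnP => [_|rj]; [apply: gP | rewrite raddf0 nth_default].
Qed.

Section TranscendentalEngine.
Variables (T : comNzRingType) (Q : set T) (u v : T).
Hypotheses (primeQ : prime_ideal Q) (Quv : Q (u * v - 1)).

Let idealQ : is_ideal Q. Proof. by case: primeQ. Qed.

Lemma Q_uvX_sub1 k : Q ((u * v) ^+ k - 1).
Proof.
elim: k => [|k IH]; first by rewrite expr0 subrr; apply: (ideal0 idealQ).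
have -> : (u * v) ^+ k.+1 - 1 = (u * v) ^+ k * (u * v - 1) + ((u * v) ^+ k - 1).
  by rewrite exprS; ring.
by apply: (idealD idealQ) => //; apply: (idealMl idealQ).
Qed.

Definition transcendental_over (A : set T) :=
  forall p : {poly T}, (forall i, A p`_i) -> Q p.[u] -> forall i, Q p`_i.

Definition int_plus_ideal : set T := fun x => exists n : int, Q (x - n%:~R).

Lemma is_subring_int_plus_ideal : is_subring int_plus_ideal.
Proof.
split; first by exists 1; rewrite subrr; apply: (ideal0 idealQ).
- move=> x y [m Qm] [n Qn]; exists (m - n).
  have -> : x - y - (m - n)%:~R = (x - m%:~R) - (y - n%:~R).
    by rewrite intrB; move: (m%:~R : T) (n%:~R : T) => M N; ring.
  exact: (idealB idealQ).
- move=> x y [m Qm] [n Qn]; exists (m * n).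
  have -> : x * y - (m * n)%:~R = (x - m%:~R) * y + m%:~R * (y - n%:~R).
    by rewrite intrM; move: (m%:~R : T) (n%:~R : T) => M N; ring.
  by apply: (idealD idealQ); [apply: (idealMr idealQ) | apply: (idealMl idealQ)].
Qed.

Lemma transcendental_over_int_plus_ideal :
  int_transcendental_mod Q u -> transcendental_over int_plus_ideal.
Proof.
move=> tr_u p int_p Qpu i.
have [n Qn] := choice int_p.
pose g : {poly int} := \poly_(j < size p) n j.
have Q_sub j : Q (p`_j - (map_poly intr g)`_j).
  rewrite coef_map coef_poly; case: ltnP => // pj.
  by rewrite nth_default // raddf0 subrr; apply: (ideal0 idealQ).
have Qgu : Q (map_poly intr g).[u].
  have -> : (map_poly intr g).[u] = p.[u] - (p - map_poly intr g).[u].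
    by rewrite hornerD hornerN opprB addrC subrK.
  by apply: (idealB idealQ) => //; apply: (ideal_horner idealQ) => j; rewrite coefB.
rewrite -(subrK (map_poly intr g)`_i p`_i); apply: (idealD idealQ) => //.
by rewrite coef_map; apply: tr_u.
Qed.

Lemma exists_max_transcendental_subring : int_transcendental_mod Q u ->
  exists A, [/\ is_subring A, Q `<=` A, transcendental_over A &
    forall y, ~ A y -> ~ transcendental_over (adjoin A y)].
Proof.
move=> tr_u; pose P A := [/\ is_subring A, Q `<=` A & transcendental_over A].
have [A [[subA QA trA] Amax]] : exists A, P A /\ forall B, P B -> A `<=` B -> B `<=` A.
  apply: (@Zorn_nonempty_chains _ _ int_plus_ideal) => [|F FP Ftot Fn0].
    split; [exact: is_subring_int_plus_ideal | | exact: transcendental_over_int_plus_ideal].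
    by move=> x Qx; exists 0; rewrite subr0.
  split; first by apply: is_subring_bigcup_chain => // B /FP [].
    by case: Fn0 => B FB x Qx; exists B => //; case: (FP B FB) => _ + _; apply.
  move=> p Fp Qpu i.
  have [B FB Bp] :=
    @bigcup_chain_finite _ _ (fun j => p`_j) (size p) Ftot Fn0 (fun j _ => Fp j).
  case: (FP B FB) => subB _ trB; apply: trB Qpu i => j.
  by case: (ltnP j (size p)) => [/Bp //|pj]; rewrite nth_default //; apply: subring0.
exists A; split=> // y nAy trAy; apply: nAy.
have A_adj : A `<=` adjoin A y.
  move=> c Ac; exists c%:P; rewrite ?hornerC // => j.
  by rewrite coefC; case: eqP => _; [|apply: subring0].
apply: (Amax (adjoin A y)).
- by split; [apply: is_subring_adjoin | apply: subset_trans A_adj |].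
- exact: A_adj.
- exists 'X; rewrite ?hornerX // => j.
  by rewrite coefX; case: eqP => _; [apply: subring1 | apply: subring0].
Qed.

Section QuasiIntegral.
Variables (K : comNzRingType) (phi : {rmorphism K -> T}).
Hypotheses (Q_range : Q `<=` range phi) (trK : transcendental_over (range phi)).

Definition ev (p : {poly K}) : T := (map_poly phi p).[u].
HB.instance Definition _ := GRing.RMorphism.copy ev (horner_eval u \o map_poly phi).
Arguments ev : simpl never.

Lemma evC c : ev c%:P = phi c. Proof. by rewrite /ev map_polyC hornerC. Qed.
Lemma evX : ev 'X = u. Proof. by rewrite /ev map_polyX hornerX. Qed.

Lemma Q_ev_coef p : Q (ev p) -> forall i, Q (phi p`_i).
Proof.
by move=> Qp i; rewrite -coef_map; apply: trK Qp i => j; rewrite coef_map; exists p`_j.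
Qed.

Lemma integral_range : range phi `<=` integralOver ev.
Proof. by move=> _ [c _ <-]; rewrite -evC; apply: integral_id. Qed.

Definition quasi_integral (w : T) :=
  exists2 G : {poly K}, ~ Q (phi G`_0) & integralOver ev (ev G * w).

Lemma range_quasi_integral : range phi `<=` quasi_integral.
Proof.
move=> w range_w; exists 1; last by rewrite rmorph1 mul1r; apply: integral_range.
by rewrite coefC /= rmorph1; case: primeQ.
Qed.

Lemma is_subring_quasi_integral : is_subring quasi_integral.
Proof.
have [_ _ Qprime] := primeQ.
split; first by apply: range_quasi_integral; exists 1; rewrite ?rmorph1.
- move=> x y [G1 nQ1 I1] [G2 nQ2 I2]; exists (G1 * G2).
    by rewrite coef0M rmorphM => /Qprime [].
  have -> : ev (G1 * G2) * (x - y) = ev G2 * (ev G1 * x) - ev G1 * (ev G2 * y).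
    by rewrite rmorphM; ring.
  by apply: integral_sub; apply: integral_mul => //; apply: integral_id.
- move=> x y [G1 nQ1 I1] [G2 nQ2 I2]; exists (G1 * G2).
    by rewrite coef0M rmorphM => /Qprime [].
  have -> : ev (G1 * G2) * (x * y) = (ev G1 * x) * (ev G2 * y) by rewrite rmorphM; ring.
  exact: integral_mul.
Qed.

Lemma Q_of_integral_mul_v a : integralOver ev (phi a * v) -> Q (phi a).
Proof.
case=> p mon_p root_p; set n := (size p).-1.
have size_p : size p = n.+1 by rewrite /n prednK // lt0n size_poly_eq0 monic_neq0.
(* [W.[u] = u ^+ n * p.[a * v]] modulo [Q], and [W`_0 = a ^+ n]. *)
pose W : {poly K} := \sum_(j < n.+1) p`_j * (a ^+ j)%:P * 'X^(n - j).
have QW : Q (ev W).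
  rewrite -[ev W]subr0 -(mulr0 (u ^+ n)) -(rootP root_p).
  rewrite (@horner_coef_wide _ n.+1) ?(leq_trans (size_poly _ _)) ?size_p //.
  rewrite rmorph_sum mulr_sumr -sumrB; apply: (ideal_sum idealQ) => j _.
  rewrite coef_map /= !rmorphM /= evC !rmorphXn /= evX.
  have -> : u ^+ n = u ^+ (n - j) * u ^+ j by rewrite -exprD subnK // -ltnS.
  have -> : ev p`_j * phi a ^+ j * u ^+ (n - j) -
      u ^+ (n - j) * u ^+ j * (ev p`_j * (phi a * v) ^+ j) =
      - (ev p`_j * phi a ^+ j * u ^+ (n - j)) * ((u * v) ^+ j - 1).
    by rewrite !exprMn; move: (u ^+ (n - j)) (u ^+ j) (v ^+ j) (phi a ^+ j) => U1 U2 V A; ring.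
  by apply: (idealMl idealQ); apply: Q_uvX_sub1.
have W0 : W`_0 = a ^+ n.
  rewrite /W coef_sum big_ord_recr /= subnn expr0 mulr1 big1 ?add0r => [|j _].
    by rewrite coefMC -lead_coefE -/n (monicP mon_p) coef1 mul1r.
  by rewrite coefMXn subn_gt0 ltn_ord.
by apply: (@prime_idealX _ _ _ n primeQ); rewrite -rmorphXn -W0; apply: Q_ev_coef.
Qed.

Lemma not_quasi_integral_v : ~ quasi_integral v.
Proof.
case=> G nQG intGv; apply/nQG/Q_of_integral_mul_v.
have take1 : take_poly 1 G = (G`_0)%:P.
  by apply/polyP => i; rewrite coef_take_poly coefC; case: i.
set D := drop_poly 1 G.
have eG : ev G = phi G`_0 + ev D * u.
  by rewrite -[in LHS](poly_take_drop 1 G) take1 rmorphD rmorphM /= evC expr1 evX.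
have -> : phi G`_0 * v = ev G * v - (ev D + ev D * (u * v - 1)) by rewrite eG; ring.
apply: integral_sub => //; apply: integral_add; first exact: integral_id.
by apply/integral_range/Q_range/(idealMl idealQ).
Qed.

Lemma quasi_integral_pow_mul w (C : {poly K}) :
  ~ Q (ev C) -> integralOver ev (ev C * w) -> exists k, quasi_integral (u ^+ k * w).
Proof.
move=> nQC intCw.
have : exists i, `[< ~ Q (phi C`_i) >].
  apply: contrapT => /forallNP allQ; apply/nQC/(ideal_horner idealQ) => i; rewrite coef_map.
  by apply: contrapT => nQi; apply: (allQ i); apply/asboolP.
case/ex_minnP => k /asboolP nQk minQk.
exists k, (drop_poly k C); first by rewrite coef_drop_poly add0n.
have Qtake : Q (ev (take_poly k C)).
  apply: (ideal_horner idealQ) => i; rewrite coef_map coef_take_poly /=.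
  case: ifP => [ik|_]; last by rewrite rmorph0; apply: (ideal0 idealQ).
  by apply: contrapT => nQi; move: (minQk i (asboolT nQi)); rewrite leqNgt ik.
have -> : ev (drop_poly k C) * (u ^+ k * w) = ev C * w - ev (take_poly k C) * w.
  by rewrite -{2}(poly_take_drop k C) rmorphD rmorphM rmorphXn /= evX; ring.
by apply: integral_sub => //; apply/integral_range/Q_range/(idealMr idealQ).
Qed.

Lemma adjoin_swap y : ~ transcendental_over (adjoin (range phi) y) ->
  exists P : {poly {poly K}}, Q (map_poly ev P).[y] /\ exists j, ~ Q (ev P`_j).
Proof.
move=> ntr; have [p [adj_p Qpu [i nQi]]] : exists p : {poly T},
    [/\ forall i, adjoin (range phi) y p`_i, Q p.[u] & exists i, ~ Q p`_i].
  apply: contrapT => H; apply: ntr => p adj_p Qpu i; apply: contrapT => nQi.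
  by apply: H; exists p; split=> //; exists i.
have [R pR] : {R : nat -> {poly K} & forall i, p`_i = (map_poly phi (R i)).[y]}.
  apply: (@choice _ _ (fun j R => p`_j = (map_poly phi R).[y])) => j.
  have [r range_r ->] := adj_p j.
  by have [r' <-] := lift_poly_range range_r; exists r'.
pose B : {poly {poly K}} := \poly_(j < size p) R j.
have pB : p = map_poly (horner_eval y \o map_poly phi) B.
  apply/polyP => j; rewrite coef_map coef_poly /=; case: ltnP => pj; first exact: pR.
  by rewrite nth_default // !rmorph0.
exists (swapXY B); split.
  by rewrite (@eq_map_poly _ _ ev (horner_eval u \o map_poly phi)) // horner_map_swapXY -pB.
apply: contrapT => /forallNP allQ; apply: nQi; rewrite pB coef_map /=.
apply: (ideal_horner idealQ) => j; rewrite coef_map /= -coef_swapXY.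
by apply: Q_ev_coef; apply: contrapT; apply: allQ.
Qed.

Lemma integral_mul_of_not_transcendental y :
  ~ transcendental_over (adjoin (range phi) y) ->
  exists2 C : {poly K}, ~ Q (ev C) & integralOver ev (ev C * y).
Proof.
move=> /adjoin_swap [P0 [QP0 [j nQj]]].
have [P [QP nQlead]] := exists_lead_coef_notin idealQ QP0 nQj.
exists (lead_coef P) => //.
have [c _ ev_c] := Q_range QP; rewrite -evC in ev_c.
have size_P : (1 < size P)%N.
  rewrite ltnNge; apply/negP => sP; move: QP nQlead.
  by rewrite [P]size1_polyC // map_polyC hornerC lead_coefC.
have size_c : (size (- (c%:P)%:P) < size P)%N.
  by rewrite size_polyN size_polyC (leq_ltn_trans (leq_b1 _)).
rewrite -(lead_coefDl size_c); apply: integral_lead_coef_mul.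
  by rewrite size_polyDl.
by rewrite /root rmorphB /= map_polyC /= hornerD hornerN hornerC ev_c subrr.
Qed.

End QuasiIntegral.

Lemma maximal_subring_of_int_transcendental_mod :
  int_transcendental_mod Q u -> exists M : set T, maximal_subring M.
Proof.
move=> tr_u; have [A [subA QA trA Amax]] := exists_max_transcendental_subring tr_u.
have [K [phi A_range]] := subring_is_range subA; rewrite {}A_range in QA trA Amax.
apply: (exists_maximal_subring (is_subring_quasi_integral phi)
  (not_quasi_integral_v QA trA)) => S' subS' qiS' S'v w.
have [k qik] : exists k, quasi_integral phi (u ^+ k * w).
  have [range_w|nrange_w] := pselect (range phi w).
    by exists 0%N; rewrite expr0 mul1r; apply: range_quasi_integral.
  have [C nQC intCw] := integral_mul_of_not_transcendental QA trA (Amax w nrange_w).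
  exact: (quasi_integral_pow_mul QA nQC intCw).
have -> : w = v ^+ k * (u ^+ k * w) - ((u * v) ^+ k - 1) * w.
  by rewrite exprMn; move: (u ^+ k) (v ^+ k) => U V; ring.
apply: subringB => //; first by apply: subringM => //; [apply: subringX | apply: qiS'].
by apply/qiS'/range_quasi_integral/QA/(idealMr idealQ)/Q_uvX_sub1.
Qed.

End TranscendentalEngine.

Definition int_transcendental (R : comNzRingType) (x : R) := int_transcendental_mod [set 0] x.

Lemma int_transcendental_neq0 (R : comNzRingType) (x : R) : int_transcendental x -> x != 0.
Proof.
move=> tr_x; apply/eqP => x0; have := tr_x 'X; rewrite map_polyX hornerX => /(_ x0 1%N).
by rewrite coefX /= => /eqP; rewrite oner_eq0.
Qed.

Lemma horner_int_rmorph (R T : comNzRingType) (f : {rmorphism R -> T}) (g : {poly int}) x :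
  (map_poly intr g).[f x] = f (map_poly intr g).[x].
Proof. by rewrite -horner_map -map_poly_comp (eq_map_poly (rmorph_int f)). Qed.

Lemma maximal_subring_of_contraction (R T : comNzRingType) (f : {rmorphism R -> T})
    (P : set T) (x : R) (w : T) :
    prime_ideal P -> P (f x * w - 1) -> int_transcendental x ->
    (forall g : {poly int}, P (f (map_poly intr g).[x]) -> (map_poly intr g).[x] = 0) ->
  exists M : set T, maximal_subring M.
Proof.
move=> primeP Pxw tr_x contr; apply: (maximal_subring_of_int_transcendental_mod primeP Pxw).
move=> g; rewrite horner_int_rmorph => /contr /tr_x Pg i.
by rewrite -(rmorph_int f) Pg rmorph0; case: primeP => idP _ _; apply: ideal0.
Qed.

Lemma maximal_subring_of_unit_transcendental (R : idomainType) (T : comNzRingType)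
    (f : {rmorphism R -> T}) (x : R) (w : T) :
  injective f -> int_transcendental x -> f x * w = 1 -> exists M : set T, maximal_subring M.
Proof.
move=> inj_f tr_x fxw; pose M : set T := [set f a | a in [set a | a != 0]].
have [P _ maxP] : exists2 P, [set 0] `<=` P & max_ideal_avoiding M P.
  apply: exists_max_ideal_avoiding => [|_ -> [a a0 fa0]].
    by split=> [//|_ _ -> ->|r _ ->]; rewrite ?addr0 ?mulr0.
  by move/eqP: a0; apply; apply: inj_f; rewrite fa0 rmorph0.
have primeP : prime_ideal P.
  apply: max_ideal_avoiding_prime maxP; rewrite /M.
    by exists 1; [exact: oner_neq0 | exact: rmorph1].
  by move=> _ _ [a a0 <-] [b b0 <-]; exists (a * b); [exact: mulf_neq0 | exact: rmorphM].
have Pxw : P (f x * w - 1) by rewrite fxw subrr; case: primeP => idP _ _; apply: ideal0.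
apply: (maximal_subring_of_contraction primeP Pxw tr_x).
move=> g Pg; apply: contrapT => /eqP g0.
by case: maxP => _ PM _; apply: (PM _ Pg); exists (map_poly intr g).[x].
Qed.

Lemma int_transcendental_of_not_dvdr_int (R : idomainType) (q : R) : q != 0 ->
  (forall n : int, n%:~R != 0 :> R -> ~ dvdr q n%:~R) -> int_transcendental q.
Proof.
move=> q0 ndvd g gq i; apply: contrapT => /eqP gi0.
case/ex_minnP: (ex_intro (fun k => (g`_k)%:~R != 0 :> R) i gi0) => k gk0 min_k.
pose p := map_poly (intr : int -> R) g.
have take_k : take_poly k p = 0.
  apply/polyP => j; rewrite coef_take_poly coef0 coef_map /=; case: ifP => // jk.
  by apply/eqP; apply: contraT => /min_k; rewrite leqNgt jk.
have [h hE] : exists h : {poly R}, drop_poly k p = h * ('X - q%:P).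
  apply/factor_theorem/rootP; have : p.[q] = 0 := gq.
  rewrite -{1}(poly_take_drop k p) take_k add0r hornerM hornerXn => /eqP.
  by rewrite mulf_eq0 expf_eq0 (negbTE q0) andbF orbF => /eqP.
apply: (ndvd _ gk0); exists (- h`_0).
have := congr1 (fun r : {poly R} => r`_0) hE; rewrite /= coef_drop_poly add0n coef_map /=.
by rewrite coef0M coefB coefX coefC /= sub0r mulrN mulNr.
Qed.

Lemma not_surj_of_uncountable (R : Type) (C : countType) (e : C -> R) :
  uncountable R -> ~ (forall r, exists c, e c = r).
Proof.
move=> unc surj; have [s es] := @choice _ _ (fun r c => e c = r) surj.
apply: unc; exists (fun r => pickle (s r)) => r1 r2 /(pcan_inj pickleK) s12.
by rewrite -(es r1) s12 es.
Qed.

Lemma exists_root_seq (R : idomainType) (p : {poly R}) :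
  p != 0 -> exists s : seq R, forall x, root p x -> x \in s.
Proof.
have [n] := ubnP (size p); elim: n p => // n IH p sp p0.
have [[a pa]|noroot] := pselect (exists a, root p a); last first.
  by exists [::] => x px; case: noroot; exists x.
have [q pq] := factor_theorem p a pa.
have q0 : q != 0 by apply: contraNneq p0 => q0; rewrite pq q0 mul0r.
have [|s sP] := IH q _ q0.
  by rewrite -ltnS (leq_trans _ sp) // pq size_Mmonic ?monicXsubC // size_XsubC addn2.
exists (a :: s) => x; rewrite inE pq rootM root_XsubC => /orP[/sP ->|->]; by rewrite ?orbT.
Qed.

Lemma int_algebraic_enum (R : idomainType) :
  exists e : {poly int} * nat -> R, forall x, ~ int_transcendental x -> exists c, e c = x.
Proof.
have [rs rsP] : {rs : {poly int} -> seq R & forall g (x : R),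
    map_poly (intr : int -> R) g != 0 -> root (map_poly intr g) x -> x \in rs g}.
  apply: (@choice _ _ (fun g s => forall x, map_poly (intr : int -> R) g != 0 ->
    root (map_poly intr g) x -> x \in s)) => g.
  have [g0|/exists_root_seq [s sP]] := eqVneq (map_poly (intr : int -> R) g) 0.
    by exists [::].
  by exists s => x _; apply: sP.
exists (fun c => nth 0 (rs c.1) c.2) => x ntr_x.
have [g [gx0 [i gi0]]] : exists g : {poly int},
    (map_poly intr g).[x] = 0 /\ exists i, (g`_i)%:~R != 0 :> R.
  apply: contrapT => noalg; apply: ntr_x => g gx0 i; apply: contrapT => /eqP gi0.
  by apply: noalg; exists g; split=> //; exists i.
have g0 : map_poly (intr : int -> R) g != 0.
  by apply: contraNneq gi0 => g0; rewrite -coef_map g0 coef0.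
by exists (g, index x (rs g)); rewrite /= nth_index // rsP //; apply/rootP.
Qed.

Lemma exists_int_transcendental (R : idomainType) :
  uncountable R -> exists x : R, int_transcendental x.
Proof.
move=> unc; apply: contrapT => /forallNP ntr; have [e eP] := int_algebraic_enum R.
by apply: (not_surj_of_uncountable unc) => x; apply: eP (ntr x).
Qed.

Section PIDTheory.
Variables (R : idomainType).
Hypothesis pidR : is_PID R.

Lemma pid_prime_ideal_maximal (J I : set R) (q : R) :
    prime_ideal J -> J q -> q != 0 -> is_ideal I -> J `<=` I -> ~ I 1 -> I `<=` J.
Proof.
move=> primeJ Jq q0 idI JI nI1; have [idJ _ Jprime] := primeJ.
have [a Ia] := pidR idI; have [b Jb] := pidR idJ.
have b0 : b != 0 by apply: contra_neq q0 => b0; have [c ->] := (Jb q).1 Jq; rewrite b0 mulr0.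
have [c bca] := (Ia b).1 (JI b ((Jb b).2 (dvdr_refl b))).
have Jca : J (c * a) by rewrite -bca; apply/Jb; exists 1; rewrite mul1r.
case: (Jprime c a Jca) => [/Jb [d cdb]|Ja].
  exfalso; apply: nI1; apply/Ia; exists d.
  by apply: (mulIf b0); rewrite mul1r {1}bca cdb mulrAC.
by move=> z /Ia [c' ->]; apply: idealMl.
Qed.

Definition sdvdr (c b : R) := [/\ b != 0, dvdr c b & ~ dvdr b c].

Lemma Acc_sdvdr (b : R) : Acc sdvdr b.
Proof.
(* The union of a divisor chain is an ideal, whose generator divides some member. *)
apply: contrapT => nAcc.
have step a : ~ Acc sdvdr a -> exists c, sdvdr c a /\ ~ Acc sdvdr c.
  move=> na; apply: contrapT => /forallNP noc; apply: na; constructor => c sca.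
  by apply: contrapT => nc; apply: (noc c).
have [next nextP] : {next : R -> R &
    forall a, ~ Acc sdvdr a -> sdvdr (next a) a /\ ~ Acc sdvdr (next a)}.
  apply: (@choice _ _ (fun a c => ~ Acc sdvdr a -> sdvdr c a /\ ~ Acc sdvdr c)) => a.
  by have [/step [c ?]|Aa] := pselect (~ Acc sdvdr a); [exists c | exists a].
pose s n := iter n next b.
have s_nAcc n : ~ Acc sdvdr (s n) by elim: n => //= n IH; case: (nextP _ IH).
have s_sdvdr n : sdvdr (s n.+1) (s n) by case: (nextP _ (s_nAcc n)).
have s_dvdr m n : (m <= n)%N -> dvdr (s n) (s m).
  move/subnK <-; elim: (n - m)%N => [|k IH]; first exact: dvdr_refl.
  by apply: (dvdr_trans _ IH); case: (s_sdvdr (k + m)%N).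
pose I z := exists n, dvdr (s n) z.
have idI : is_ideal I.
  split; first by exists 0%N; apply: ideal0 (dvdr_ideal _).
  - move=> y z [m sm] [n sn]; exists (maxn m n); apply: (idealD (dvdr_ideal _)).
      by apply: (dvdr_trans _ sm); apply/s_dvdr/leq_maxl.
    by apply: (dvdr_trans _ sn); apply/s_dvdr/leq_maxr.
  - by move=> r z [n sn]; exists n; apply: (idealMl (dvdr_ideal _)).
have [a Ia] := pidR idI.
have [n sn_a] : I a by apply/Ia; exists 1; rewrite mul1r.
have a_sn1 : dvdr a (s n.+1) by apply/Ia; exists n.+1; apply: dvdr_refl.
by case: (s_sdvdr n) => _ _; apply; apply: dvdr_trans sn_a a_sn1.
Qed.

Lemma exists_prime_divisor (b : R) : b != 0 -> b \isn't a GRing.unit ->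
  exists q, prime_ideal (dvdr q) /\ dvdr q b.
Proof.
move=> b0 nub.
have [J bJ maxJ] : exists2 J, dvdr b `<=` J & max_ideal_avoiding [set 1] J.
  apply: exists_max_ideal_avoiding => [|_ [c ->] cb1]; first exact: dvdr_ideal.
  by move/negP: nub; apply; apply/unitrPr; exists c; rewrite mulrC.
have primeJ : prime_ideal J by apply: max_ideal_avoiding_prime maxJ => // _ _ -> ->; rewrite mulr1.
have [idJ _ _] := primeJ; have [q Jq] := pidR idJ.
have eJ : J = dvdr q by apply/funext => z; apply/propext; exact: Jq.
by exists q; rewrite -eJ; split=> //; apply/bJ/dvdr_refl.
Qed.

Definition mem_up_to_unit (s : seq R) (d : R) :=
  exists2 d0, d0 \in s & exists2 w, w \is a GRing.unit & d = w * d0.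

Lemma exists_divisor_seq (b : R) :
  b != 0 -> exists s : seq R, forall d, dvdr d b -> mem_up_to_unit s d.
Proof.
elim: (Acc_sdvdr b) => {}b _ IH b0.
have [ub|nub] := boolP (b \is a GRing.unit).
  exists [:: 1] => d [c bcd]; exists 1; rewrite ?mem_head //; exists d; last by rewrite mulr1.
  by move: ub; rewrite bcd unitrM => /andP[].
have [q [primeq [c bcq]]] := exists_prime_divisor b0 nub.
have [_ nq1 qprime] := primeq.
have q0 : q != 0 by apply: contra_neq b0 => q0; rewrite bcq q0 mulr0.
have c0 : c != 0 by apply: contra_neq b0 => c0; rewrite bcq c0 mul0r.
have sc : sdvdr c b.
  split=> //; first by exists q; rewrite mulrC.
  case=> e ceb; apply: nq1; exists e; apply: (mulIf c0).
  by rewrite mul1r {1}ceb bcq mulrAC mulrA.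
have [s sP] := IH c sc c0.
have dvd_c d e : e * d * q = c * q -> mem_up_to_unit s d.
  by move=> /(mulIf q0) ced; apply: sP; exists e.
exists (s ++ map (fun d => d * q) s) => d [e bed].
have [[d' dd'q]|nqd] := pselect (dvdr q d).
  have [d0 d0s [w uw d'E]] : mem_up_to_unit s d'.
    by apply: (dvd_c d' e); rewrite -mulrA -dd'q -bed.
  exists (d0 * q); first by rewrite mem_cat (map_f _ d0s) orbT.
  by exists w; rewrite // dd'q d'E mulrA.
have q_ed : dvdr q (e * d) by rewrite -bed; exists c.
case: (qprime e d q_ed) => [[e' ee'q]|//].
have [d0 d0s ud] : mem_up_to_unit s d.
  by apply: (dvd_c d e'); rewrite mulrAC -ee'q -bed.
by exists d0; rewrite // mem_cat d0s.
Qed.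

Lemma exists_maximal_ideal_over (T : comNzRingType) (f : {rmorphism R -> T})
    (J : set R) (q : R) :
    prime_ideal J -> (forall z, J z <-> dvdr q z) -> q != 0 ->
    ~ (exists w, f q * w = 1) ->
  exists2 N, max_ideal_avoiding [set 1] N & [set a | N (f a)] `<=` J.
Proof.
move=> primeJ Jq q0 nunit_fq.
have [N fqN maxN] : exists2 N, dvdr (f q) `<=` N & max_ideal_avoiding [set 1] N.
  apply: exists_max_ideal_avoiding => [|_ [c ->] cfq1]; first exact: dvdr_ideal.
  by apply: nunit_fq; exists c; rewrite mulrC.
have [idN N1 _] := maxN.
exists N => //; apply: (pid_prime_ideal_maximal primeJ ((Jq q).2 (dvdr_refl q)) q0).
- split=> [|a b Na Nb|c a Na]; rewrite /= ?rmorph0 ?rmorphD ?rmorphM.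
  + exact: ideal0.
  + exact: idealD.
  + exact: idealMl.
- move=> a /Jq [c ->]; rewrite /= rmorphM; apply: (idealMl idN).
  by apply: fqN; apply: dvdr_refl.
- by rewrite /= rmorph1 => /N1; apply.
Qed.

Lemma maximal_subring_of_nondivisor (T : comNzRingType) (f : {rmorphism R -> T}) (x r : R) :
    injective f -> int_transcendental x -> r != 0 ->
    (forall g : {poly int}, (map_poly intr g).[x] != 0 -> ~ dvdr r (map_poly intr g).[x]) ->
  exists M : set T, maximal_subring M.
Proof.
move=> inj_f tr_x r0 r_ndvd.
pose V : set R := [set z | exists2 g : {poly int}, z = (map_poly intr g).[x] & z != 0].
have [J rJ maxJ] : exists2 J, dvdr r `<=` J & max_ideal_avoiding V J.
  apply: exists_max_ideal_avoiding => [|z rz [g zE gx0]]; first exact: dvdr_ideal.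
  by rewrite zE in rz gx0; apply: r_ndvd gx0 rz.
have [idJ JV _] := maxJ.
have primeJ : prime_ideal J.
  apply: max_ideal_avoiding_prime maxJ; first by exists 1; rewrite ?rmorph1 ?hornerC ?oner_neq0.
  by move=> _ _ [g -> g0] [h -> h0]; exists (g * h); rewrite ?rmorphM ?hornerM ?mulf_neq0.
have [q Jq] := pidR idJ.
have q0 : q != 0.
  by apply: contra_neq r0 => q0; have [c ->] := (Jq r).1 (rJ r (dvdr_refl r)); rewrite q0 mulr0.
have [[w fqw]|nunit_fq] := pselect (exists w, f q * w = 1).
  apply: (maximal_subring_of_unit_transcendental inj_f _ fqw).
  apply: int_transcendental_of_not_dvdr_int => // n n0 /Jq Jn.
  by apply: (JV _ Jn); exists n%:P; rewrite ?map_polyC ?hornerC.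
have [N maxN N_J] := exists_maximal_ideal_over primeJ Jq q0 nunit_fq.
have primeN : prime_ideal N by apply: max_ideal_avoiding_prime maxN => // _ _ -> ->; rewrite mulr1.
have nJx : ~ J x.
  by move=> Jx; apply: (JV _ Jx); exists 'X; rewrite ?map_polyX ?hornerX ?int_transcendental_neq0.
have [j [s [Nj js1]]] := max_ideal_avoiding_adjoin maxN (fun Nfx => nJx (N_J x Nfx)).
have Nxs : N (f x * s - 1).
  by rewrite -js1 mulrC opprD addrCA subrr addr0; case: primeN => idN _ _; apply: idealN.
apply: (maximal_subring_of_contraction primeN Nxs tr_x) => g /N_J Jg.
by apply: contrapT => /eqP g0; apply: (JV _ Jg); exists g.
Qed.

Lemma not_uncountable_of_dvdr_values (x : R) :
    (forall w : R, w \is a GRing.unit -> ~ int_transcendental w) ->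
    (forall r, r != 0 -> exists2 g : {poly int},
      (map_poly intr g).[x] != 0 & dvdr r (map_poly intr g).[x]) ->
  ~ uncountable R.
Proof.
move=> alg_units dvd_values unc.
have [alg algP] := int_algebraic_enum R.
have [ds dsP] : {ds : R -> seq R &
    forall b d : R, b != 0 -> dvdr d b -> mem_up_to_unit (ds b) d}.
  apply: (@choice _ _ (fun b s => forall d : R, b != 0 -> dvdr d b -> mem_up_to_unit s d)).
  move=> b; have [->|/exists_divisor_seq [s sP]] := eqVneq b 0; first by exists [::].
  by exists s => d _; apply: sP.
pose e (c : ({poly int} * nat) * ({poly int} * nat)) :=
  alg c.2 * nth 0 (ds (map_poly intr c.1.1).[x]) c.1.2.
apply: (not_surj_of_uncountable (e := e) unc) => r.
have [->|r0] := eqVneq r 0.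
  have [c0 c0E] := algP 0 (fun tr0 => negP (int_transcendental_neq0 tr0) (eqxx 0)).
  by exists ((0, 0%N), c0); rewrite /e /= c0E mul0r.
have [g gx0 r_dvd] := dvd_values r r0.
have [d0 d0_in [w uw ->]] := dsP _ _ gx0 r_dvd.
have [c <-] := algP w (alg_units w uw).
by exists ((g, index d0 (ds (map_poly intr g).[x])), c); rewrite /e /= nth_index.
Qed.

End PIDTheory.

Unset Implicit Arguments.
Theorem proposition2p27 (R : idomainType) (hPID : is_PID R) (hR : uncountable R)
  (T : comNzRingType) (f : {rmorphism R -> T}) (hf : injective f) :
  exists S : T -> Prop, maximal_subring S.
Proof.
have [[x [tr_x [w fxw]]]|no_unit_tr] :=
  pselect (exists x, int_transcendental x /\ exists w, f x * w = 1).
  exact: (maximal_subring_of_unit_transcendental hf tr_x fxw).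
have [x tr_x] := exists_int_transcendental hR.
have [[r [r0 r_ndvd]]|all_dvd] := pselect (exists r, r != 0 /\ forall g : {poly int},
    (map_poly intr g).[x] != 0 -> ~ dvdr r (map_poly intr g).[x]).
  exact: (maximal_subring_of_nondivisor hPID hf tr_x r0 r_ndvd).
exfalso; apply: (not_uncountable_of_dvdr_values hPID (x := x)) hR.
- move=> w /unitrPr [w' ww'] tr_w; apply: no_unit_tr; exists w; split=> //.
  by exists (f w'); rewrite -rmorphM ww' rmorph1.
- move=> r r0; apply: contrapT => no_g; apply: all_dvd; exists r; split=> // g gx0 r_dvd.
  by apply: no_g; exists g.
Qed.
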